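(* Let $F$ be the unique series in $\mathbb{Q}[x,\bar x,y,\bar y][[t]]$ satisfying $(1-St)F=\bar x\bar y-\bar x t[x^0][y^\ge]F-\bar y t[y^0][x^\ge]F$, and set $F_1=[x^<]F+[x^\ge][y^<]F$ and $F_2=[x^\ge][y^\ge]F$ (so $F=F_1+F_2$). Define $$H(x,y,t)=(\bar x-x)\,[\bar x]\Bigl(\bar y\,[y^\le]F_1(x,\bar y,t)-y\,[y^\ge]F_1(x,y,t)\Bigr).$$ Then $$F_2(x,y,t)=\bar x\bar y t\,[x^>][y^>]\frac{H(x,y,t)+H(y,x,t)}{1-St}.$$
   Context: Notation: $\bar x=x^{-1}$, $\bar y=y^{-1}$, $S=x+y+\bar x+\bar y$; series in $\mathbb{Q}[x,\bar x,y,\bar y][[t]]$, with $1/(1-St)$ expanded as a power series in $t$. For $G=\sum c_{i,j,n}x^iy^jt^n$: $[x^0]G=\sum_{j,n}c_{0,j,n}y^jt^n$, $[y^0]G=\sum_{i,n}c_{i,0,n}x^it^n$; $[x^<],[x^\le],[x^\ge],[x^>]$ denote the sums of terms with $x$-exponent $<0$, $\le0$, $\ge0$, $>0$ respectively, analogously for $y$; $[\bar x]G=\sum_{j,n}c_{-1,j,n}y^jt^n$ is the coefficient of $x^{-1}$. *)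

(* Formal power series in t with Laurent-polynomial
   coefficients in x, y over Q, represented by coefficient functions
   G i j n = [x^i y^j t^n] G. *)
From HB Require Import structures.
From mathcomp Require Import all_boot all_order all_algebra.
Set Implicit Arguments. Unset Strict Implicit. Unset Printing Implicit Defensive.
Import Order.TTheory GRing.Theory Num.Theory.
Local Open Scope ring_scope.

Definition series := int -> int -> nat -> rat.

Definition laurent_series (G : series) : Prop :=
  forall n : nat, exists N : nat, forall (i j : int),
    ((N < `|i|)%N || (N < `|j|)%N) -> G i j n = 0.

Definition sadd (G K : series) : series := fun i j n => G i j n + K i j n.
Definition ssub (G K : series) : series := fun i j n => G i j n - K i j n.

Definition mul_x (G : series) : series := fun i j n => G (i - 1) j n.
Definition mul_xb (G : series) : series := fun i j n => G (i + 1) j n.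
Definition mul_y (G : series) : series := fun i j n => G i (j - 1) n.
Definition mul_yb (G : series) : series := fun i j n => G i (j + 1) n.
Definition mul_t (G : series) : series :=
  fun i j n => match n with 0%N => 0 | n'.+1 => G i j n' end.

Definition mul_S (G : series) : series :=
  sadd (sadd (mul_x G) (mul_y G)) (sadd (mul_xb G) (mul_yb G)).

(* G / (1 - S t) = sum_k S^k t^k G *)
Definition div_1_St (G : series) : series :=
  fun i j n => \sum_(k < n.+1) iter k mul_S G i j (n - k)%N.

Definition xbyb : series :=
  fun i j n => if (i == -1) && (j == -1) && (n == 0%N) then 1 else 0.

Definition cx0 (G : series) : series := fun i j n => if i == 0 then G i j n else 0.
Definition cy0 (G : series) : series := fun i j n => if j == 0 then G i j n else 0.
Definition cxlt (G : series) : series := fun i j n => if i < 0 then G i j n else 0.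
Definition cxle (G : series) : series := fun i j n => if i <= 0 then G i j n else 0.
Definition cxge (G : series) : series := fun i j n => if 0 <= i then G i j n else 0.
Definition cxgt (G : series) : series := fun i j n => if 0 < i then G i j n else 0.
Definition cylt (G : series) : series := fun i j n => if j < 0 then G i j n else 0.
Definition cyle (G : series) : series := fun i j n => if j <= 0 then G i j n else 0.
Definition cyge (G : series) : series := fun i j n => if 0 <= j then G i j n else 0.
Definition cygt (G : series) : series := fun i j n => if 0 < j then G i j n else 0.
(* [xbar] G : coefficient of x^{-1}, a series in y and t only *)
Definition cxbar (G : series) : series := fun i j n => if i == 0 then G (-1) j n else 0.

Definition subst_yb (G : series) : series := fun i j n => G i (- j) n.
Definition swap_xy (G : series) : series := fun i j n => G j i n.

Definition series_eq (G K : series) : Prop := forall i j n, G i j n = K i j n.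

Definition funeq (F : series) : Prop :=
  series_eq (ssub F (mul_t (mul_S F)))
            (ssub (ssub xbyb (mul_xb (mul_t (cx0 (cyge F)))))
                  (mul_yb (mul_t (cy0 (cxge F))))).

Definition F1 (F : series) : series := sadd (cxlt F) (cxge (cylt F)).
Definition F2 (F : series) : series := cxge (cyge F).

Definition Hser (F : series) : series :=
  let inner := ssub (mul_yb (cyle (subst_yb (F1 F)))) (mul_y (cyge (F1 F))) in
  let c := cxbar inner in
  ssub (mul_xb c) (mul_x c).

(* Write K = H(x,y) + H(y,x) and E = t K / (1 - St), so that the claim says
   [x^a y^b] F = [x^(a+1) y^(b+1)] E for all a, b >= 0.
   1. H is antisymmetric under x -> xbar and under y -> ybar, hence so are K
      and E (multiplication by S and by t commutes with both reflections);
      in particular E vanishes on the lines x^0 and y^0.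
   2. E satisfies E = t K + t S E, and the functional equation gives
      F = xbar ybar + t S F - (boundary terms), which vanish in the quadrant.
   3. F is symmetric in x and y, and on the shifted quadrant K only sees the
      boundary values: K(a+1, b+1) = [a = 0] F(-1, b) + [b = 0] F(-1, a).
   4. By induction on the t-degree, F and the shifted E agree on the quadrant:
      the neighbours of (a, b) that leave the quadrant are exactly compensated
      by the boundary values in K, using the vanishing of E on the axes. *)
From mathcomp Require Import all_boot all_order all_algebra.
From mathcomp Require Import zify ring lra.
Import Order.TTheory GRing.Theory Num.Theory.
Local Open Scope ring_scope.

Definition antix (G : series) : Prop := forall i j n, G (- i) j n = - G i j n.
Definition antiy (G : series) : Prop := forall i j n, G i (- j) n = - G i j n.

Definition t_div_1_St (G : series) : series := mul_t (div_1_St G).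

Lemma antix_axis (G : series) : antix G -> forall j n, G 0 j n = 0.
Proof. by move=> hG j n; have := hG 0 j n; rewrite oppr0; lra. Qed.

Lemma antiy_axis (G : series) : antiy G -> forall i n, G i 0 n = 0.
Proof. by move=> hG i n; have := hG i 0 n; rewrite oppr0; lra. Qed.

(* S is invariant under both reflections, so multiplying by S preserves
   antisymmetry; the same holds for t and hence for t / (1 - St). *)
Lemma mul_S_antix (G : series) : antix G -> antix (mul_S G).
Proof.
move=> hG i j n; rewrite /mul_S /sadd /mul_x /mul_y /mul_xb /mul_yb.
have -> : - i - 1 = - (i + 1) by ring.
have -> : - i + 1 = - (i - 1) by ring.
rewrite !hG; ring.
Qed.

Lemma mul_S_antiy (G : series) : antiy G -> antiy (mul_S G).
Proof.
move=> hG i j n; rewrite /mul_S /sadd /mul_x /mul_y /mul_xb /mul_yb.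
have -> : - j - 1 = - (j + 1) by ring.
have -> : - j + 1 = - (j - 1) by ring.
rewrite !hG; ring.
Qed.

Lemma t_div_1_St_antix (G : series) : antix G -> antix (t_div_1_St G).
Proof.
move=> hG i j [|n] /=; first by rewrite oppr0.
rewrite /div_1_St -sumrN; apply: eq_bigr => k _.
have hk : antix (iter k mul_S G) by elim: (k : nat) => //= k' IHk; apply: mul_S_antix.
exact: hk.
Qed.

Lemma t_div_1_St_antiy (G : series) : antiy G -> antiy (t_div_1_St G).
Proof.
move=> hG i j [|n] /=; first by rewrite oppr0.
rewrite /div_1_St -sumrN; apply: eq_bigr => k _.
have hk : antiy (iter k mul_S G) by elim: (k : nat) => //= k' IHk; apply: mul_S_antiy.
exact: hk.
Qed.

Lemma t_div_1_St_rec (G : series) a b n :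
  t_div_1_St G a b n.+1 = G a b n + mul_S (t_div_1_St G) a b n.
Proof.
rewrite /t_div_1_St /= /div_1_St big_ord_recl /= subn0; congr (_ + _).
case: n => [|n]; first by rewrite big_ord0 /mul_S /sadd /mul_x /mul_y /mul_xb /mul_yb /=; ring.
rewrite /mul_S /sadd /mul_x /mul_y /mul_xb /mul_yb -!big_split /=.
by apply: eq_bigr => k _; rewrite subSS.
Qed.

Section FunctionalEquation.
Variable F : series.
Hypothesis hF : funeq F.

Lemma funeq_init a b : F a b 0 = xbyb a b 0.
Proof. by have := hF a b 0%N; rewrite /ssub /= /mul_xb /mul_yb /=; lra. Qed.

Lemma funeq_rec a b n :
  F a b n.+1 = mul_S F a b n - cx0 (cyge F) (a + 1) b n - cy0 (cxge F) a (b + 1) n.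
Proof. by have := hF a b n.+1; rewrite /ssub /xbyb /mul_xb /mul_yb /= andbF; lra. Qed.

Lemma funeq_rec_quadrant a b n : 0 <= a -> 0 <= b ->
  F a b n.+1 = mul_S F a b n.
Proof.
move=> ha hb; rewrite funeq_rec /cx0 /cy0.
have -> : (a + 1 == 0) = false by lia.
have -> : (b + 1 == 0) = false by lia.
by rewrite !subr0.
Qed.

(* The equation is invariant under exchanging x and y, hence so is F. *)
Lemma F_sym n a b : F a b n = F b a n.
Proof.
elim: n a b => [|n IH] a b.
  by rewrite !funeq_init /xbyb; case: (a == -1); case: (b == -1).
rewrite !funeq_rec /mul_S /sadd /mul_x /mul_y /mul_xb /mul_yb /cx0 /cy0 /cyge /cxge.
rewrite (IH (b - 1) a) (IH b (a - 1)) (IH (b + 1) a) (IH b (a + 1)); ring.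
Qed.

End FunctionalEquation.

(* H is antisymmetric in x (through the factor xbar - x) and in y (the two
   terms ybar [y^<=] F1(x,ybar) and y [y^>=] F1(x,y) are exchanged by y -> ybar). *)
Lemma Hser_antix (F : series) : antix (Hser F).
Proof.
move=> i j n; rewrite /Hser /ssub /mul_xb /mul_x /cxbar.
have -> : - i + 1 = - (i - 1) by ring.
have -> : - i - 1 = - (i + 1) by ring.
rewrite !oppr_eq0; case: (i - 1 == 0); case: (i + 1 == 0); ring.
Qed.

Lemma Hser_antiy (F : series) : antiy (Hser F).
Proof.
move=> i j n.
rewrite /Hser /ssub /mul_xb /mul_x /cxbar /mul_yb /mul_y /cyle /cyge /subst_yb.
have -> : (- j + 1 <= 0) = (0 <= j - 1) by lia.
have -> : (0 <= - j - 1) = (j + 1 <= 0) by lia.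
have -> : - (- j + 1) = j - 1 by ring.
have -> : - j - 1 = - (j + 1) by ring.
case: (i + 1 == 0); case: (i - 1 == 0); case: (0 <= j - 1); case: (j + 1 <= 0); ring.
Qed.

Definition Kser (F : series) : series := sadd (Hser F) (swap_xy (Hser F)).

Lemma Kser_antix (F : series) : antix (Kser F).
Proof. by move=> i j n; rewrite /Kser /sadd /swap_xy Hser_antix Hser_antiy; ring. Qed.

Lemma Kser_antiy (F : series) : antiy (Kser F).
Proof. by move=> i j n; rewrite /Kser /sadd /swap_xy Hser_antix Hser_antiy; ring. Qed.

Lemma Hser_quadrant (F : series) i j n : 0 <= i -> 0 <= j ->
  Hser F (i + 1) (j + 1) n = if i == 0 then F (-1) j n else 0.
Proof.
move=> hi hj.
rewrite /Hser /ssub /mul_xb /mul_x /cxbar /mul_yb /mul_y /cyle /cyge /subst_yb.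
have -> : (i + 1 + 1 == 0) = false by lia.
have -> : (i + 1 - 1 == 0) = (i == 0) by lia.
have -> : (j + 1 + 1 <= 0) = false by lia.
have -> : (0 <= j + 1 - 1) = true by lia.
rewrite addrK /F1 /sadd /cxlt /cxge /cylt /=.
by case: (i == 0); ring.
Qed.

Section QuadrantInduction.
Variable F : series.
Hypothesis hF : funeq F.

Let E : series := t_div_1_St (Kser F).

Definition quadrant_eq (n : nat) : Prop :=
  forall a b, 0 <= a -> 0 <= b -> F a b n = E (a + 1) (b + 1) n.

Lemma quadrant_eq0 : quadrant_eq 0.
Proof.
move=> a b ha hb; rewrite funeq_init // /xbyb.
by have -> : (a == -1) = false by lia.
Qed.

Section Step.
Variable n : nat.
Hypothesis IH : quadrant_eq n.

(* Leaving the quadrant to the left is compensated by E vanishing on x^0 and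
   by the boundary value F(-1, b) carried by K. *)
Lemma left_neighbour a b : 0 <= a -> 0 <= b ->
  F (a - 1) b n = E a (b + 1) n + (if a == 0 then F (-1) b n else 0).
Proof.
move=> ha hb; case: eqP => [->|ha0].
  rewrite sub0r antix_axis ?add0r //.
  by apply/t_div_1_St_antix/Kser_antix.
by rewrite IH ?subrK ?addr0 //; lia.
Qed.

(* Same below, using the symmetry of F to read F(a, -1) as F(-1, a). *)
Lemma lower_neighbour a b : 0 <= a -> 0 <= b ->
  F a (b - 1) n = E (a + 1) b n + (if b == 0 then F (-1) a n else 0).
Proof.
move=> ha hb; case: eqP => [->|hb0].
  rewrite sub0r antiy_axis ?add0r; first exact: F_sym.
  by apply/t_div_1_St_antiy/Kser_antiy.
by rewrite IH ?subrK ?addr0 //; lia.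
Qed.

Lemma quadrant_eqS : quadrant_eq n.+1.
Proof.
move=> a b ha hb.
rewrite funeq_rec_quadrant // /E t_div_1_St_rec -/E.
rewrite /Kser /sadd /swap_xy !Hser_quadrant //.
rewrite /mul_S /sadd /mul_x /mul_y /mul_xb /mul_yb.
rewrite left_neighbour // lower_neighbour // (IH (a + 1) b) ?(IH a (b + 1)); try lia.
rewrite !addrK; case: (a == 0); case: (b == 0); ring.
Qed.

End Step.

Lemma quadrant_eq_all n : quadrant_eq n.
Proof. by elim: n => [|n IH]; [exact: quadrant_eq0 | exact: quadrant_eqS]. Qed.

End QuadrantInduction.

Theorem mainTheorem8 (F : series) :
  laurent_series F -> funeq F ->
  series_eq (F2 F)
    (mul_xb (mul_yb (mul_t (cxgt (cygt (div_1_St (sadd (Hser F) (swap_xy (Hser F))))))))).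
Proof.
move=> _ hF a b n; rewrite /F2 /cxge /cyge /mul_xb /mul_yb.
have -> : mul_t (cxgt (cygt (div_1_St (Kser F)))) (a + 1) (b + 1) n =
    if (0 < a + 1) && (0 < b + 1) then t_div_1_St (Kser F) (a + 1) (b + 1) n else 0.
  by rewrite /t_div_1_St /cxgt /cygt; case: n => [|n] /=;
     case: (0 < a + 1); case: (0 < b + 1).
have [ha|ha] := boolP (0 <= a); last first.
  by have -> : 0 < a + 1 = false by lia.
have [hb|hb] := boolP (0 <= b); last first.
  by rewrite (_ : 0 < b + 1 = false) ?andbF //; lia.
have -> : (0 < a + 1) && (0 < b + 1) by lia.
exact: quadrant_eq_all.
Qed.
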